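(* Let $K$ be a field of characteristic $p>0$, $e\in\mathbb N_{>0}$, $m\in\mathbb N_{>0}$. Every $m$-truncated $e$-dimensional HS-derivation $(D_{\mathbf i})_{\mathbf i\in[p^m]^e}$ on $K$ (over $\mathbb F_p$) extends to an $e$-dimensional HS-derivation $(D'_{\mathbf i})_{\mathbf i\in\mathbb N^e}$ on $K$, i.e. $D'_{\mathbf i}=D_{\mathbf i}$ for all $\mathbf i\in[p^m]^e$.
   Context: For $m\in\mathbb N_{>0}\cup\{\infty\}$ and a ring $R$ of characteristic $p$ put $R[\bar v]:=R[X_1,\dots,X_e]/(X_1^{p^m},\dots,X_e^{p^m})$, with $v_i$ the image of $X_i$ (for $m=\infty$, $R[\bar v]:=R[[X_1,\dots,X_e]]$). Let $[p^m]=\{0,\dots,p^m-1\}$ ($[p^\infty]=\mathbb N$), $\bar v^{\mathbf i}=v_1^{i_1}\cdots v_e^{i_e}$. An $m$-truncated $e$-dimensional HS-derivation on $R$ (over $\mathbb F_p$) is a family $(D_{\mathbf i}:R\to R)_{\mathbf i\in[p^m]^e}$ such that $r\mapsto\sum_{\mathbf i}D_{\mathbf i}(r)\bar v^{\mathbf i}$ is a ring homomorphism $R\to R[\bar v]$ and $D_{\mathbf 0}=\mathrm{id}_R$; for $m=\infty$ it is called an $e$-dimensional HS-derivation. *)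

From HB Require Import structures.
From mathcomp Require Import all_boot all_order all_algebra.
Set Implicit Arguments. Unset Strict Implicit. Unset Printing Implicit Defensive.
Import GRing.Theory.
Local Open Scope ring_scope.

Definition midx (e : nat) := {ffun 'I_e -> nat}.

Definition midx0 (e : nat) : midx e := [ffun _ => 0%N].

Definition in_box (e N : nat) (i : midx e) : bool := [forall t, (i t < N)%N].

(* Coefficient at v^i of the product (sum_j F_j v^j)(sum_k G_k v^k):
   sum over all decompositions i = j + k (componentwise) of F_j * G_k.
   j ranges over multi-indices with j <= i componentwise (encoded with
   components in 'I_(max_t i_t + 1)), and k := i - j. *)
Definition midx_conv (R : pzRingType) (e : nat) (F G : midx e -> R)
    (i : midx e) : R :=
  \sum_(j : {ffun 'I_e -> 'I_((\max_(t < e) i t).+1)} | [forall t, (j t <= i t)%N])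
     F [ffun t => nat_of_ord (j t)] * G [ffun t => (i t - j t)%N].

(* Family (D_i)_{i in P} of maps R -> R such that r |-> sum_{i in P} D_i(r) v^i
   is a ring homomorphism into R[v] (for P = [p^m]^e: R[X]/(X_k^{p^m});
   for P = N^e: R[[X]]) with D_0 = id.  Written out: additivity, 1 |-> 1,
   and multiplicativity coefficientwise (the coefficient of v^i, i in P, of
   a product only involves j, k <= i, which lie again in P).
   Values D_i for i outside P are irrelevant. *)
Definition is_HS_on (R : pzRingType) (e : nat) (P : pred (midx e))
    (D : midx e -> R -> R) : Prop :=
  [/\ forall r, D (midx0 e) r = r,
      forall i, P i -> forall a b, D i (a + b) = D i a + D i b,
      forall i, P i -> D i 1 = (i == midx0 e)%:R &
      forall i, P i -> forall a b,
        D i (a * b) = midx_conv (fun j => D j a) (fun k => D k b) i].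

Definition is_trunc_HS (R : pzRingType) (p m e : nat) (D : midx e -> R -> R) :=
  is_HS_on (in_box (p ^ m)) D.

Definition is_HS (R : pzRingType) (e : nat) (D : midx e -> R -> R) :=
  is_HS_on predT D.

From HB Require Import structures.
From mathcomp Require Import all_boot all_order all_algebra.
From mathcomp Require Import mpoly.
From Stdlib Require Import Classical ClassicalEpsilon.
From mathcomp Require boolp classical_sets.
Set Implicit Arguments. Unset Strict Implicit. Unset Printing Implicit Defensive.
Import GRing.Theory.
Local Open Scope ring_scope.

(* A truncated HS-derivation of length [N = p ^ m] is a ring morphism
   [psi : K -> K[X_1, ..., X_e] / (X_1^N, ..., X_e^N)] with constant term [id].
   It suffices to lift such a morphism modulo [(X^N)] to one modulo [(X^(N+1))]:
   the coherent tower of lifts then has an HS-derivation as its limit.  For one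
   step only [Z^p <= I] matters, where [Z = (X^N)] and [I = (X^(N+1))].  On [K^p]
   a lift is forced, [c^p |-> phi(c)^p], and by Zorn's lemma there is a maximal
   lift, defined on a subfield [S] containing [K^p].  If [a] were not in [S],
   then [X^p - a^p] would be the minimal polynomial of [a] over [S], and
   [X |-> phi(a)] would extend the lift to [S(a) = S[X]/(X^p - a^p)], since
   [phi(a)^p] is the value already prescribed for [a^p]. *)

Record is_ideal (B : comNzRingType) (J : B -> Prop) : Prop := IsIdeal {
  ideal0 : J 0;
  idealD : forall x y, J x -> J y -> J (x + y);
  idealMl : forall x y, J y -> J (x * y) }.

Section IdealTheory.
Variables (B : comNzRingType) (J : B -> Prop).
Hypothesis idJ : is_ideal J.

Lemma idealMr x y : J x -> J (x * y).
Proof. by move=> Jx; rewrite mulrC; apply: (idealMl idJ). Qed.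

Lemma idealN x : J x -> J (- x).
Proof. by move=> Jx; rewrite -mulN1r; apply: (idealMl idJ). Qed.

Lemma idealB x y : J x -> J y -> J (x - y).
Proof. by move=> Jx Jy; apply: (idealD idJ) Jx (idealN Jy). Qed.

Lemma ideal_sum (I : Type) (r : seq I) (P : pred I) (F : I -> B) :
  (forall i, P i -> J (F i)) -> J (\sum_(i <- r | P i) F i).
Proof.
by move=> JF; elim/big_ind: _ => //; [exact: (ideal0 idJ) | apply: (idealD idJ)].
Qed.

Lemma ideal_subrr x : J (x - x).
Proof. by rewrite subrr; exact: (ideal0 idJ). Qed.

Lemma ideal_subr_sym x y : J (x - y) -> J (y - x).
Proof. by move=> Jxy; rewrite -opprB; apply: idealN. Qed.

Lemma ideal_subr_trans x y z : J (x - y) -> J (y - z) -> J (x - z).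
Proof. by move=> Jxy Jyz; rewrite -[x](subrK y) -addrA; apply: (idealD idJ). Qed.

Lemma ideal_subrM x x' y y' : J (x - x') -> J (y - y') -> J (x * y - x' * y').
Proof.
move=> Jx Jy; rewrite -[x * y](subrK (x * y')) -mulrBr -addrA -mulrBl.
by apply: (idealD idJ); [apply: (idealMl idJ) | apply: idealMr].
Qed.

Lemma ideal_horner (q : {poly B}) y : (forall k, J q`_k) -> J q.[y].
Proof. by move=> Jq; rewrite horner_coef; apply: ideal_sum => i _; apply: idealMr. Qed.

End IdealTheory.

Lemma size_sub_lead_mul_monic (R : idomainType) (q d : {poly R}) :
  d \is monic -> q != 0 -> (size d <= size q)%N ->
  (size (q - (lead_coef q *: 'X^(size q - size d)) * d)%R < size q)%N.
Proof.
move=> md q_neq0 le_dq; set w := _ * d.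
have lcq_neq0 : lead_coef q != 0 by rewrite lead_coef_eq0.
have c_neq0 : lead_coef q *: 'X^(size q - size d) != 0.
  by rewrite scale_poly_eq0 negb_or lcq_neq0 monic_neq0 ?monicXn.
have size_w : size w = size q.
  by rewrite size_Mmonic // size_scale // size_polyXn addSn subnK.
have lc_w : lead_coef w = lead_coef q.
  by rewrite lead_coef_Mmonic // lead_coefZ lead_coefXn mulr1.
rewrite (polySpred q_neq0) ltnS; apply/leq_sizeP => j; rewrite coefB.
rewrite leq_eqVlt => /predU1P[<-|lt_j].
  by rewrite -lead_coefE -size_w -lead_coefE lc_w subrr.
by rewrite !nth_default ?subrr // ?size_w (polySpred q_neq0).
Qed.

Lemma coef_XsubC_expn (R : comNzRingType) (c : R) k :
  (('X - c%:P) ^+ k.+1)`_k = - (c *+ k.+1).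
Proof.
have := @coefPn_prod_XsubC R (nseq k.+1 c); rewrite size_nseq => /(_ isT).
by rewrite !big_nseq iter_mulr_1 iter_addr addr0.
Qed.

Section FrobeniusSubring.
Variables (K : fieldType) (p : nat).

Record frob_subring (S : K -> Prop) : Prop := FrobSubring {
  frob_pchar : p \in [pchar K];
  frob_mem : forall c, S (c ^+ p);
  subringD : forall x y, S x -> S y -> S (x + y);
  subringM : forall x y, S x -> S y -> S (x * y) }.

Variable S : K -> Prop.
Hypothesis subS : frob_subring S.

Let pK : p \in [pchar K]. Proof. exact: frob_pchar subS. Qed.
Let p_gt0 : (0 < p)%N. Proof. exact/prime_gt0/(pcharf_prime pK). Qed.

Lemma subring_mem_frob_fixed c : c ^+ p = c -> S c.
Proof. by move=> <-; apply: (frob_mem subS). Qed.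

Lemma subring_mem0 : S 0.
Proof. by apply: subring_mem_frob_fixed; rewrite expr0n gtn_eqF. Qed.

Lemma subring_mem1 : S 1.
Proof. by apply: subring_mem_frob_fixed; rewrite expr1n. Qed.

Lemma subring_mem_nat n : S n%:R.
Proof. by apply: subring_mem_frob_fixed; rewrite -(pFrobenius_autE pK) rmorph_nat. Qed.

Lemma subringN x : S x -> S (- x).
Proof.
have N1p : (-1) ^+ p = -1 :> K by rewrite -(pFrobenius_autE pK) rmorphN1.
by move=> Sx; rewrite -mulN1r; apply: (subringM subS) => //; apply: subring_mem_frob_fixed.
Qed.

Lemma subringX x n : S x -> S (x ^+ n).
Proof.
move=> Sx; elim: n => [|n IHn]; first by rewrite expr0; exact: subring_mem1.
by rewrite exprS; apply: (subringM subS).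
Qed.

Lemma subringV x : S x -> S x^-1.
Proof.
move=> Sx; have [->|x_neq0] := eqVneq x 0; first by rewrite invr0; exact: subring_mem0.
have -> : x^-1 = x ^+ p.-1 * x^-1 ^+ p.
  by rewrite -[in X in _ * X](prednK p_gt0) exprS mulrCA -exprMn mulfV // expr1n mulr1.
by apply: (subringM subS); [apply: subringX | apply: (frob_mem subS)].
Qed.

Lemma subring_sum (J : Type) (r : seq J) (P : pred J) (F : J -> K) :
  (forall j, P j -> S (F j)) -> S (\sum_(j <- r | P j) F j).
Proof.
by move=> SF; elim/big_ind: _ => //; [exact: subring_mem0 | apply: (subringD subS)].
Qed.

Definition poly_over (q : {poly K}) := forall k, S q`_k.

Lemma poly_over0 : poly_over 0.
Proof. by move=> k; rewrite coef0; exact: subring_mem0. Qed.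

Lemma poly_overD q1 q2 : poly_over q1 -> poly_over q2 -> poly_over (q1 + q2).
Proof. by move=> S1 S2 k; rewrite coefD; apply: (subringD subS). Qed.

Lemma poly_overN q : poly_over q -> poly_over (- q).
Proof. by move=> Sq k; rewrite coefN; apply: subringN. Qed.

Lemma poly_overB q1 q2 : poly_over q1 -> poly_over q2 -> poly_over (q1 - q2).
Proof. by move=> S1 S2; apply: poly_overD S1 (poly_overN S2). Qed.

Lemma poly_overM q1 q2 : poly_over q1 -> poly_over q2 -> poly_over (q1 * q2).
Proof.
by move=> S1 S2 k; rewrite coefM; apply: subring_sum => j _; apply: (subringM subS).
Qed.

Lemma poly_overC c : S c -> poly_over c%:P.
Proof. by move=> Sc k; rewrite coefC; case: ifP => // _; exact: subring_mem0. Qed.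

Lemma poly_overXn n : poly_over 'X^n.
Proof.
by move=> k; rewrite coefXn; case: (k == n); [exact: subring_mem1 | exact: subring_mem0].
Qed.

Lemma poly_overZ c q : S c -> poly_over q -> poly_over (c *: q).
Proof. by move=> Sc Sq k; rewrite coefZ; apply: (subringM subS). Qed.

Lemma poly_over_divp_monic q d : poly_over q -> poly_over d -> d \is monic ->
  exists s t, [/\ poly_over s, poly_over t, q = s * d + t & (size t < size d)%N].
Proof.
move=> + Sd md; have [n] := ubnP (size q); elim: n q => // n IHn q.
rewrite ltnS => le_qn Sq; have [lt_qd|le_dq] := ltnP (size q) (size d).
  by exists 0, q; rewrite mul0r add0r; split=> //; exact: poly_over0.
have q_neq0 : q != 0.
  by rewrite -size_poly_gt0 (leq_trans _ le_dq) // size_poly_gt0 monic_neq0.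
set c := lead_coef q *: 'X^(size q - size d).
have Sc : poly_over c by apply: poly_overZ (poly_overXn _); rewrite lead_coefE.
have lt_qcd : (size (q - c * d)%R < n)%N.
  exact: leq_trans (size_sub_lead_mul_monic md q_neq0 le_dq) le_qn.
have [s [t [Ss St qcd_eq lt_td]]] := IHn _ lt_qcd (poly_overB Sq (poly_overM Sc Sd)).
exists (s + c), t; split=> //; first exact: poly_overD.
by rewrite mulrDl addrAC -qcd_eq subrK.
Qed.

End FrobeniusSubring.

Section LiftModIdeal.
Variables (K : fieldType) (B : comNzRingType) (p : nat).
Hypotheses (pK : p \in [pchar K]) (pB : p \in [pchar B]).
Variables (I Z : B -> Prop).
Hypotheses (idI : is_ideal I) (idZ : is_ideal Z).
Hypothesis Zp_sub_I : forall z, Z z -> I (z ^+ p).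
Variable phi : K -> B.
Hypotheses (phiD : {morph phi : a b / a + b}) (phi1 : phi 1 = 1).
Hypothesis phiM : forall a b, Z (phi (a * b) - phi a * phi b).

Let p_gt1 : (1 < p)%N. Proof. exact/prime_gt1/(pcharf_prime pK). Qed.
Let p_gt0 : (0 < p)%N. Proof. exact: ltnW p_gt1. Qed.

Lemma phi0 : phi 0 = 0.
Proof. by apply: (addrI (phi 0)); rewrite -phiD !addr0. Qed.

Lemma phi_sum (J : Type) (r : seq J) (P : pred J) (F : J -> K) :
  phi (\sum_(j <- r | P j) F j) = \sum_(j <- r | P j) phi (F j).
Proof. by elim/big_rec2: _ => [|j y1 y2 _ <-]; rewrite ?phi0 ?phiD. Qed.

Lemma phiX_mod a n : Z (phi (a ^+ n) - phi a ^+ n).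
Proof.
elim: n => [|n IHn]; first by rewrite !expr0 phi1; exact: (ideal_subrr idZ).
rewrite !exprSr; apply: (ideal_subr_trans idZ (phiM _ _)).
exact (ideal_subrM idZ IHn (ideal_subrr idZ _)).
Qed.

Lemma frobenius_subr_mod u v : Z (u - v) -> I (u ^+ p - v ^+ p).
Proof. by rewrite -!(pFrobenius_autE pB) -rmorphB; apply: Zp_sub_I. Qed.

Record partial_lift (S : K -> Prop) (f : K -> B) : Prop := PartialLift {
  pl_subring : frob_subring p S;
  pl_additive : forall x y, S x -> S y -> f (x + y) = f x + f y;
  pl_multiplicative : forall x y, S x -> S y -> I (f (x * y) - f x * f y);
  pl_congr : forall x, S x -> Z (f x - phi x);
  pl_frobenius : forall c, f (c ^+ p) = phi c ^+ p }.

Definition lift_le (u v : (K -> Prop) * (K -> B)) :=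
  (forall y, u.1 y -> v.1 y) /\ (forall y, u.1 y -> v.2 y = u.2 y).

Lemma lift_le_refl u : lift_le u u.
Proof. by split. Qed.

Lemma lift_le_trans u v w : lift_le u v -> lift_le v w -> lift_le u w.
Proof.
move=> [uv fuv] [vw fvw]; split=> y uy; first exact/vw/uv.
by rewrite fvw ?fuv //; apply: uv.
Qed.

Section PartialLiftTheory.
Variables (S : K -> Prop) (f : K -> B).
Hypothesis Sf : partial_lift S f.
Let subS := pl_subring Sf.

Lemma pl_f0 : f 0 = 0.
Proof. by have := pl_frobenius Sf 0; rewrite phi0 !expr0n gtn_eqF. Qed.

Lemma pl_f1 : f 1 = 1.
Proof. by have := pl_frobenius Sf 1; rewrite phi1 !expr1n. Qed.

Lemma pl_fN x : S x -> f (- x) = - f x.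
Proof.
move=> Sx; apply/eqP; rewrite -addr_eq0 -(pl_additive Sf) ?addNr ?pl_f0 //.
exact: (subringN subS).
Qed.

Lemma pl_f_sum (J : Type) (r : seq J) (P : pred J) (F : J -> K) :
  (forall j, P j -> S (F j)) ->
  f (\sum_(j <- r | P j) F j) = \sum_(j <- r | P j) f (F j).
Proof.
move=> SF; elim: r => [|j r IHr]; first by rewrite !big_nil pl_f0.
rewrite !big_cons; case: ifP => // Pj.
have Sr : S (\sum_(i <- r | P i) F i) by apply: (subring_sum subS).
by rewrite (pl_additive Sf) ?IHr //; apply: SF.
Qed.

End PartialLiftTheory.

Section Adjoin.
Variables (S : K -> Prop) (f : K -> B).
Hypothesis Sf : partial_lift S f.
Let subS := pl_subring Sf.
Variable a : K.
Hypothesis a_notin_S : ~ S a.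

Let Sap : S (a ^+ p). Proof. exact: (frob_mem subS). Qed.

Let mp := 'X^p - (a ^+ p)%:P.

Let poly_over_mp : poly_over S mp.
Proof. exact (poly_overB subS (poly_overXn subS p) (poly_overC subS Sap)). Qed.

Let mpE : mp = ('X - a%:P) ^+ p.
Proof.
have pP : p \in [pchar {poly K}] by rewrite pchar_poly.
by rewrite -(pFrobenius_autE pP) rmorphB /= !pFrobenius_autE -polyC_exp.
Qed.

Let root_mp : root mp a.
Proof. by rewrite rootE !hornerE subrr. Qed.

(* A monic factor over [S] of [X^p - a^p = (X - a)^p] is some [(X - a)^k];
   its coefficient [- k a] lies in [S], which forces [k = 0] or [k = p]. *)
Lemma poly_over_root_size (r : {poly K}) :
  poly_over S r -> r != 0 -> root r a -> (p < size r)%N.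
Proof.
have [n] := ubnP (size r); elim: n r => // n IHn r; rewrite ltnS => le_rn Sr r_neq0 ra.
rewrite ltnNge; apply/negP => le_rp.
have lc_neq0 : lead_coef r != 0 by rewrite lead_coef_eq0.
set r1 := (lead_coef r)^-1 *: r.
have Sr1 : poly_over S r1.
  by apply: (poly_overZ subS) => //; apply: (subringV subS); rewrite lead_coefE.
have mr1 : r1 \is monic by apply/monicP; rewrite lead_coefZ mulVf.
have size_r1 : size r1 = size r by rewrite size_scale ?invr_eq0.
have r1a : root r1 a by rewrite rootZ ?invr_eq0.
have [s [t [_ St mp_eq lt_t]]] := poly_over_divp_monic subS poly_over_mp Sr1 mr1.
have t_eq0 : t = 0.
  apply/eqP; apply: contraLR le_rp => t_neq0; rewrite -ltnNge.
  have ta : root t a.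
    by move: root_mp; rewrite mp_eq rootE hornerD hornerM (rootP r1a) mulr0 add0r.
  have lt_tn : (size t < n)%N by rewrite (leq_trans lt_t) // size_r1.
  by rewrite (ltn_trans (IHn t lt_tn St t_neq0 ta)) // -size_r1.
have /dvdp_exp_XsubCP[k le_kp] : r1 %| ('X - a%:P) ^+ p.
  by rewrite -mpE mp_eq t_eq0 addr0 dvdp_mull.
rewrite eqp_monic ?monic_exp ?monicXsubC // => /eqP r1E.
case: k r1E le_kp => [|k] r1E le_kp.
  by move: r1a; rewrite r1E expr0 rootE hornerC oner_eq0.
have lt_kp : (k.+1 < p)%N by move: le_rp; rewrite -size_r1 r1E size_exp_XsubC.
have Sak : S (a *+ k.+1).
  by rewrite -[_ *+ _]opprK -coef_XsubC_expn -r1E; apply/(subringN subS)/Sr1.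
have k_neq0 : k.+1%:R != 0 :> K by rewrite -(dvdn_pcharf pK) gtnNdvd.
apply: a_notin_S; rewrite -[a](mulfK k_neq0) mulr_natr.
by apply: (subringM subS) Sak _; apply/(subringV subS)/(subring_mem_nat subS).
Qed.

Definition lift_eval (q : {poly K}) := (map_poly f q).[phi a].

Lemma lift_evalD q1 q2 : poly_over S q1 -> poly_over S q2 ->
  lift_eval (q1 + q2) = lift_eval q1 + lift_eval q2.
Proof.
move=> S1 S2; rewrite /lift_eval -hornerD; congr _.[_]; apply/polyP => i.
by rewrite coefD !coef_map_id0 ?(pl_f0 Sf) // coefD (pl_additive Sf).
Qed.

Lemma lift_evalN q : poly_over S q -> lift_eval (- q) = - lift_eval q.
Proof.
move=> Sq; rewrite /lift_eval -hornerN; congr _.[_]; apply/polyP => i.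
by rewrite coefN !coef_map_id0 ?(pl_f0 Sf) // coefN (pl_fN Sf).
Qed.

Lemma lift_evalB q1 q2 : poly_over S q1 -> poly_over S q2 ->
  lift_eval (q1 - q2) = lift_eval q1 - lift_eval q2.
Proof. by move=> S1 S2; rewrite lift_evalD ?lift_evalN //; exact (poly_overN subS S2). Qed.

Lemma lift_evalC c : lift_eval c%:P = f c.
Proof.
rewrite /lift_eval (_ : map_poly f c%:P = (f c)%:P) ?hornerC //.
apply/polyP => i; rewrite coef_map_id0 ?(pl_f0 Sf) // !coefC.
by case: ifP; rewrite ?(pl_f0 Sf).
Qed.

Lemma lift_evalXn n : lift_eval 'X^n = phi a ^+ n.
Proof.
rewrite /lift_eval (_ : map_poly f 'X^n = 'X^n) ?hornerXn //.
apply/polyP => i; rewrite coef_map_id0 ?(pl_f0 Sf) // !coefXn.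
by case: (i == n); rewrite ?(pl_f0 Sf) ?(pl_f1 Sf).
Qed.

Lemma lift_evalM_mod q1 q2 : poly_over S q1 -> poly_over S q2 ->
  I (lift_eval (q1 * q2) - lift_eval q1 * lift_eval q2).
Proof.
move=> S1 S2; rewrite /lift_eval -hornerM -hornerN -hornerD; apply: (ideal_horner idI) => k.
rewrite coefB coefM !coef_map_id0 ?(pl_f0 Sf) // coefM (pl_f_sum Sf); last first.
  by move=> j _; apply: (subringM subS).
rewrite -sumrB; apply: (ideal_sum idI) => j _.
by rewrite !coef_map_id0 ?(pl_f0 Sf) //; apply: (pl_multiplicative Sf).
Qed.

Lemma lift_eval_congr q : poly_over S q -> Z (lift_eval q - phi q.[a]).
Proof.
move=> Sq; rewrite /lift_eval (horner_coef_wide _ (size_poly _ _)) horner_coef phi_sum.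
rewrite -sumrB; apply: (ideal_sum idZ) => i _; rewrite coef_map_id0 ?(pl_f0 Sf) //.
apply: (ideal_subr_trans idZ (y := phi q`_i * phi a ^+ i)).
  exact (ideal_subrM idZ (pl_congr Sf (Sq i)) (ideal_subrr idZ _)).
apply/(ideal_subr_sym idZ)/(ideal_subr_trans idZ (phiM _ _)).
exact (ideal_subrM idZ (ideal_subrr idZ _) (phiX_mod _ _)).
Qed.

Definition reduced_rep (y : K) (r : {poly K}) :=
  [/\ poly_over S r, (size r <= p)%N & r.[a] = y].

Definition adjoin (y : K) := exists r, reduced_rep y r.

Lemma reduced_rep_uniq y r1 r2 : reduced_rep y r1 -> reduced_rep y r2 -> r1 = r2.
Proof.
case=> S1 size_r1 r1a [S2 size_r2 r2a].
have size_r : (size (r1 - r2)%R <= p)%N.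
  by rewrite (leq_trans (size_polyD _ _)) // size_polyN geq_max size_r1 size_r2.
have root_r : root (r1 - r2) a by rewrite rootE !hornerE r1a r2a subrr.
apply/eqP; rewrite -subr_eq0; apply: contraTT size_r => nz; rewrite -ltnNge.
exact: poly_over_root_size (poly_overB subS S1 S2) nz root_r.
Qed.

Lemma reduced_repC c : S c -> reduced_rep c c%:P.
Proof.
move=> Sc; split; [exact (poly_overC subS Sc) | | exact: hornerC].
exact: leq_trans (size_polyC_leq1 _) p_gt0.
Qed.

Lemma reduced_repX : reduced_rep a 'X.
Proof.
split; [exact (poly_overXn subS 1) | | exact: hornerX].
by rewrite size_polyX.
Qed.

Lemma reduced_repD y1 y2 r1 r2 :
  reduced_rep y1 r1 -> reduced_rep y2 r2 -> reduced_rep (y1 + y2) (r1 + r2).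
Proof.
case=> S1 size_r1 <- [S2 size_r2 <-].
split; [exact (poly_overD subS S1 S2) | | exact: hornerD].
by rewrite (leq_trans (size_polyD _ _)) // geq_max size_r1 size_r2.
Qed.

Lemma reduced_repM y1 y2 r1 r2 : reduced_rep y1 r1 -> reduced_rep y2 r2 ->
  exists2 s, poly_over S s & reduced_rep (y1 * y2) (r1 * r2 - s * mp).
Proof.
case=> S1 _ <- [S2 _ <-].
have monic_mp : mp \is monic by apply/monicP; rewrite lead_coefXnsubC.
have [s [t [Ss St r12E lt_t]]] :=
  poly_over_divp_monic subS (poly_overM subS S1 S2) poly_over_mp monic_mp.
exists s => //; rewrite r12E addrC addKr; split=> //.
  by rewrite -ltnS -(size_XnsubC (a ^+ p) p_gt0).
by rewrite -hornerM r12E hornerD hornerM (rootP root_mp) mulr0 add0r.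
Qed.

Definition adjoin_rep (y : K) := epsilon (inhabits 0) (reduced_rep y).

Lemma adjoin_repE y r : reduced_rep y r -> adjoin_rep y = r.
Proof. by move=> yr; apply: (reduced_rep_uniq _ yr); apply: epsilon_spec; exists r. Qed.

Definition adjoin_lift (y : K) := lift_eval (adjoin_rep y).

Lemma adjoin_liftE y r : reduced_rep y r -> adjoin_lift y = lift_eval r.
Proof. by move=> /adjoin_repE; rewrite /adjoin_lift => ->. Qed.

Lemma lift_eval_mp : lift_eval mp = 0.
Proof.
have [SXp SCap] := (poly_overXn subS p, poly_overC subS Sap).
by rewrite lift_evalB // lift_evalXn lift_evalC (pl_frobenius Sf) subrr.
Qed.

Lemma adjoin_lift_multiplicative y1 y2 : adjoin y1 -> adjoin y2 ->
  I (adjoin_lift (y1 * y2) - adjoin_lift y1 * adjoin_lift y2).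
Proof.
move=> [r1 y1r1] [r2 y2r2]; have [s Ss y12r] := reduced_repM y1r1 y2r2.
have [[S1 _ _] [S2 _ _]] := (y1r1, y2r2).
have [S12 Ssmp] := (poly_overM subS S1 S2, poly_overM subS Ss poly_over_mp).
rewrite (adjoin_liftE y12r) (adjoin_liftE y1r1) (adjoin_liftE y2r2) lift_evalB // addrAC.
apply: (idealB idI); first exact: lift_evalM_mod.
by rewrite -[lift_eval _]subr0 -(mulr0 (lift_eval s)) -lift_eval_mp; apply: lift_evalM_mod.
Qed.

Lemma partial_lift_adjoin : partial_lift adjoin adjoin_lift.
Proof.
split.
- split; first exact: pK.
  + by move=> c; exists (c ^+ p)%:P; apply/reduced_repC/(frob_mem subS).
  + by move=> y1 y2 [r1 y1r1] [r2 y2r2]; exists (r1 + r2); exact: reduced_repD.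
  + move=> y1 y2 [r1 y1r1] [r2 y2r2].
    by have [s _ y12r] := reduced_repM y1r1 y2r2; exists (r1 * r2 - s * mp).
- move=> y1 y2 [r1 y1r1] [r2 y2r2]; have [[S1 _ _] [S2 _ _]] := (y1r1, y2r2).
  rewrite (adjoin_liftE (reduced_repD y1r1 y2r2)).
  by rewrite (adjoin_liftE y1r1) (adjoin_liftE y2r2) lift_evalD.
- exact: adjoin_lift_multiplicative.
- move=> _ [r [Sr size_r <-]]; rewrite (adjoin_liftE (And3 Sr size_r erefl)).
  exact: lift_eval_congr.
- move=> c; have Scp := frob_mem subS c.
  by rewrite (adjoin_liftE (reduced_repC Scp)) lift_evalC (pl_frobenius Sf).
Qed.

Lemma adjoin_extends : lift_le (S, f) (adjoin, adjoin_lift).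
Proof.
split=> y /reduced_repC yr; first by exists y%:P.
by rewrite /= (adjoin_liftE yr) lift_evalC.
Qed.

Lemma adjoin_mem : adjoin a.
Proof. by exists 'X; exact: reduced_repX. Qed.

End Adjoin.

Definition pth_powers (c : K) := exists d, c = d ^+ p.

Definition frob_root (c : K) := epsilon (inhabits 0) (fun d => c = d ^+ p).

Lemma frob_rootK c : frob_root (c ^+ p) = c.
Proof.
apply: (fmorph_inj (pFrobenius_aut pK)); rewrite /= !pFrobenius_autE.
by rewrite -(epsilon_spec (inhabits 0) (fun d => c ^+ p = d ^+ p)) //; exists c.
Qed.

Definition frob_lift (c : K) := phi (frob_root c) ^+ p.

Lemma partial_lift_pth_powers : partial_lift pth_powers frob_lift.
Proof.
have frobK (u v : K) : (u + v) ^+ p = u ^+ p + v ^+ p.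
  by rewrite -!(pFrobenius_autE pK) rmorphD.
have frobB (u v : B) : (u + v) ^+ p = u ^+ p + v ^+ p.
  by rewrite -!(pFrobenius_autE pB) rmorphD.
split; first split.
- exact: pK.
- by move=> c; exists c.
- by move=> _ _ [d1 ->] [d2 ->]; exists (d1 + d2); rewrite frobK.
- by move=> _ _ [d1 ->] [d2 ->]; exists (d1 * d2); rewrite exprMn.
- by move=> _ _ [d1 ->] [d2 ->]; rewrite /frob_lift -frobK !frob_rootK phiD frobB.
- move=> _ _ [d1 ->] [d2 ->]; rewrite /frob_lift -!exprMn !frob_rootK.
  exact: frobenius_subr_mod.
- move=> _ [d ->]; rewrite /frob_lift frob_rootK.
  exact (ideal_subr_sym idZ (phiX_mod _ _)).
- by move=> c; rewrite /frob_lift frob_rootK.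
Qed.

Lemma partial_lift_chain_ub (C : (K -> Prop) * (K -> B) -> Prop) :
  (exists u, C u) -> (forall u, C u -> partial_lift u.1 u.2) ->
  (forall u v, C u -> C v -> lift_le u v \/ lift_le v u) ->
  exists2 w, partial_lift w.1 w.2 & forall u, C u -> lift_le u w.
Proof.
move=> [u0 Cu0] Cpl Ctot.
pose U y := exists u, C u /\ u.1 y.
pose g y := epsilon (inhabits u0) (fun u => C u /\ u.1 y).
pose fU y := (g y).2 y.
have fUE u y : C u -> u.1 y -> fU y = u.2 y.
  move=> Cu uy; have [Cg gy] : C (g y) /\ (g y).1 y.
    by apply: (epsilon_spec _ (fun u => C u /\ u.1 y)); exists u.
  by rewrite /fU; have [[_ ->]|[_ ->]] := Ctot _ _ Cu Cg.
have common y1 y2 : U y1 -> U y2 -> exists2 w, C w & w.1 y1 /\ w.1 y2.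
  move=> [u1 [C1 u1y]] [u2 [C2 u2y]].
  have [[le12 _]|[le21 _]] := Ctot _ _ C1 C2; [exists u2 | exists u1]; auto.
exists (U, fU) => [|u Cu]; last by split=> [y uy|y uy]; [exists u | rewrite /= (fUE u)].
split; first split.
- exact: pK.
- by move=> c; exists u0; split=> //; apply/(frob_mem (pl_subring (Cpl _ Cu0))).
- move=> y1 y2 Uy1 Uy2; have [w Cw [wy1 wy2]] := common _ _ Uy1 Uy2; exists w; split=> //.
  exact: (subringD (pl_subring (Cpl _ Cw))).
- move=> y1 y2 Uy1 Uy2; have [w Cw [wy1 wy2]] := common _ _ Uy1 Uy2; exists w; split=> //.
  exact: (subringM (pl_subring (Cpl _ Cw))).
- move=> y1 y2 Uy1 Uy2; have [w Cw [wy1 wy2]] := common _ _ Uy1 Uy2.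
  have wpl := Cpl _ Cw; have wS := pl_subring wpl.
  by rewrite /= !(fUE w) //; [exact: (pl_additive wpl) | exact: (subringD wS)].
- move=> y1 y2 Uy1 Uy2; have [w Cw [wy1 wy2]] := common _ _ Uy1 Uy2.
  have wpl := Cpl _ Cw; have wS := pl_subring wpl.
  by rewrite /= !(fUE w) //; [exact: (pl_multiplicative wpl) | exact: (subringM wS)].
- by move=> y [w [Cw wy]]; rewrite /= (fUE w) //; exact: (pl_congr (Cpl _ Cw)).
- move=> c; have u0c := frob_mem (pl_subring (Cpl _ Cu0)) c.
  by rewrite /= (fUE u0) //; exact: (pl_frobenius (Cpl _ Cu0)).
Qed.

Lemma partial_lift_maximal : exists2 m, partial_lift m.1 m.2 &
  forall u, partial_lift u.1 u.2 -> lift_le m u -> lift_le u m.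
Proof.
pose T := {u | partial_lift u.1 u.2}.
pose R (s t : T) := boolp.asbool (lift_le (sval s) (sval t)).
have RP s t : R s t <-> lift_le (sval s) (sval t) by split=> /boolp.asboolP.
pose u0 := (pth_powers, frob_lift).
have u0_le u : partial_lift u.1 u.2 -> lift_le u0 u.
  move=> upl; split=> _ [c ->] /=; first exact: (frob_mem (pl_subring upl)).
  by rewrite (pl_frobenius upl) /frob_lift frob_rootK.
have R_ub (A : classical_sets.set T) : classical_sets.total_on A R ->
    exists t, forall s, A s -> R s t.
  move=> Atot; pose C w := w = u0 \/ exists2 s, A s & sval s = w.
  have C_pl w : C w -> partial_lift w.1 w.2.
    by case=> [->|[s _ <-]]; [exact: partial_lift_pth_powers | exact: (svalP s)].
  have C_tot v w : C v -> C w -> lift_le v w \/ lift_le w v.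
    move=> [->|[s As <-]] [->|[t At <-]]; try by [left; exact: lift_le_refl].
    + by left; apply: u0_le; exact: (svalP t).
    + by right; apply: u0_le; exact: (svalP s).
    + by have [/RP|/RP] := Atot _ _ As At; [left | right].
  have [w wpl w_ub] := partial_lift_chain_ub (ex_intro _ u0 (or_introl erefl)) C_pl C_tot.
  exists (exist _ w wpl) => s As; apply/RP.
  by apply: w_ub; right; exists s.
have R_refl s : R s s by apply/RP; exact: lift_le_refl.
have R_trans r s t : R r s -> R s t -> R r t.
  by move=> /RP rs /RP st; apply/RP; exact: lift_le_trans rs st.
have [m maxm] :=
  classical_sets.ZL_preorder (exist _ u0 partial_lift_pth_powers) R_refl R_trans R_ub.
exists (sval m); first exact: (svalP m).
by move=> u upl mu; apply/(RP (exist _ u upl) m)/maxm/RP.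
Qed.

Theorem lift_mod_ideal : exists psi : K -> B,
  [/\ {morph psi : a b / a + b}, psi 1 = 1,
      forall a b, I (psi (a * b) - psi a * psi b) & forall a, Z (psi a - phi a)].
Proof.
have [[S f] /= Sf maxSf] := partial_lift_maximal.
have S_total a : S a.
  apply: NNPP => a_notin_S.
  have [le_adjoin _] := maxSf (adjoin S a, adjoin_lift S f a)
    (partial_lift_adjoin Sf a_notin_S) (adjoin_extends Sf a_notin_S).
  exact/a_notin_S/(le_adjoin a)/(adjoin_mem Sf).
exists f; split=> [x y|||x]; first exact: (pl_additive Sf).
- exact: pl_f1 Sf.
- by move=> x y; exact: (pl_multiplicative Sf).
- exact: (pl_congr Sf).
Qed.

End LiftModIdeal.

Section BoxIdeal.
Variables (K : fieldType) (e : nat).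
Local Notation A := {mpoly K[e]}.

Definition mnm_in_box (N : nat) (m : 'X_{1..e}) := [forall t, (m t < N)%N].

Lemma mnm_in_box_mdeg N (m : 'X_{1..e}) : (0 < N)%N -> mnm_in_box (N + mdeg m) m.
Proof.
move=> N_gt0; apply/forallP => t; apply: (@leq_ltn_trans (mdeg m)).
  by rewrite mdegE (bigD1 t) //= leq_addr.
by rewrite -[X in (X < _)%N]add0n ltn_add2r.
Qed.

Definition box_ideal (N : nat) (z : A) := forall m, mnm_in_box N m -> z@_m = 0.

Lemma box_ideal_ideal N : is_ideal (box_ideal N).
Proof.
split=> [m _|x y Jx Jy m Nm|x y Jy m Nm]; first by rewrite mcoeff0.
  by rewrite mcoeffD Jx ?Jy ?addr0.
rewrite mcoeffM big1 // => k /eqP m_eq; rewrite Jy ?mulr0 //; apply/forallP => t.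
apply: leq_ltn_trans (forallP Nm t); move/mnmP: m_eq => /(_ t) ->.
by rewrite mnmDE leq_addl.
Qed.

Lemma box_idealS N N' z : (N <= N')%N -> box_ideal N' z -> box_ideal N z.
Proof.
move=> le_NN' Jz m /forallP Nm; apply: Jz; apply/forallP => t.
exact: leq_trans (Nm t) le_NN'.
Qed.

Lemma box_ideal_frobenius p N z : p \in [pchar K] -> (0 < N)%N ->
  box_ideal N z -> box_ideal N.+1 (z ^+ p).
Proof.
move=> pK N_gt0 Jz; have pA : p \in [pchar A] by rewrite pchar_lalg.
rewrite {1}(mpolyE z) -(pFrobenius_autE pA) rmorph_sum.
apply: (ideal_sum (box_ideal_ideal _)).
move=> m _; rewrite /= pFrobenius_autE exprZn mpolyXn => m' /forallP Nm'.
rewrite mcoeffZ mcoeffX; have [zm0|zm_neq0] := eqVneq z@_m 0.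
  by rewrite zm0 expr0n gtn_eqF ?mul0r // prime_gt0 // (pcharf_prime pK).
have [t le_Nm] : exists t, (N <= m t)%N.
  apply/existsP; move: zm_neq0; apply: contraR; rewrite negb_exists => /forallP Nm.
  by apply/eqP/Jz/forallP => t; rewrite ltnNge; exact: Nm.
case: eqP => [m'_eq|]; last by rewrite mulr0.
have := Nm' t; rewrite -m'_eq mulmnE ltnNge => /negP; case.
rewrite (leq_trans _ (leq_mul le_Nm (prime_gt1 (pcharf_prime pK)))) //.
by rewrite muln2 -addnn -addn1 leq_add2l.
Qed.

Definition trunc_hom (N : nat) (psi : K -> A) :=
  [/\ {morph psi : a b / a + b}, psi 1 = 1,
      forall a b, box_ideal N (psi (a * b) - psi a * psi b) & forall a, (psi a)@_0 = a].

Lemma trunc_hom_lift p N psi : p \in [pchar K] -> (0 < N)%N -> trunc_hom N psi ->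
  exists psi', trunc_hom N.+1 psi' /\ forall a, box_ideal N (psi' a - psi a).
Proof.
move=> pK N_gt0 [psiD psi1 psiM psi0].
have pA : p \in [pchar A] by rewrite pchar_lalg.
have Zp_sub_I z : box_ideal N z -> box_ideal N.+1 (z ^+ p).
  exact: box_ideal_frobenius pK N_gt0.
have [psi' [psi'D psi'1 psi'M psi'_congr]] := lift_mod_ideal pK pA
  (box_ideal_ideal N.+1) (box_ideal_ideal N) Zp_sub_I psiD psi1 psiM.
exists psi'; split=> //; split=> // a.
have box0 : mnm_in_box N 0%MM by apply/forallP => t; rewrite mnm0E.
have := psi'_congr a 0%MM box0; rewrite mcoeffB psi0 => /eqP.
by rewrite subr_eq0 => /eqP.
Qed.

End BoxIdeal.

Arguments box_ideal_ideal {K e} N.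

Section MultiIndices.
Variable e : nat.

Definition mnm_of_midx (i : midx e) : 'X_{1..e} := [multinom i t | t < e].
Definition midx_of_mnm (m : 'X_{1..e}) : midx e := [ffun t => m t].

Lemma mnm_of_midxE i t : mnm_of_midx i t = i t.
Proof. by rewrite mnmE. Qed.

Lemma midx_of_mnmK : cancel midx_of_mnm mnm_of_midx.
Proof. by move=> m; apply/mnmP => t; rewrite mnm_of_midxE ffunE. Qed.

Lemma mnm_of_midxK : cancel mnm_of_midx midx_of_mnm.
Proof. by move=> i; apply/ffunP => t; rewrite ffunE mnm_of_midxE. Qed.

Lemma mnm_of_midx_inj : injective mnm_of_midx.
Proof. exact: can_inj mnm_of_midxK. Qed.

Lemma mnm_of_midx0 : mnm_of_midx (midx0 e) = 0%MM.
Proof. by apply/mnmP => t; rewrite mnm_of_midxE ffunE mnm0E. Qed.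

Lemma mnm_in_box_midx N i : mnm_in_box N (mnm_of_midx i) = in_box N i.
Proof. by apply: eq_forallb => t; rewrite mnm_of_midxE. Qed.

Lemma eq_midx_conv (R : pzRingType) (F F' G G' : midx e -> R) (i : midx e) :
  (forall j : midx e, (forall t, (j t <= i t)%N) -> F j = F' j) ->
  (forall j : midx e, (forall t, (j t <= i t)%N) -> G j = G' j) ->
  midx_conv F G i = midx_conv F' G' i.
Proof.
move=> eqF eqG; apply: eq_bigr => j /forallP le_ji.
by rewrite eqF ?eqG // => t; rewrite ffunE // leq_subr.
Qed.

End MultiIndices.

Section ConvolutionCoefficients.
Variables (R : nzRingType) (e : nat) (i : midx e).
Let M := (\max_(t < e) i t)%N.
Let k := (mdeg (mnm_of_midx i)).+1.

Let le_iM t : (i t <= M)%N.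
Proof. by rewrite /M (bigD1 t) //= leq_maxl. Qed.

Let lowered (j : {ffun 'I_e -> 'I_M.+1}) : 'X_{1..e} :=
  mnm_of_midx [ffun t => nat_of_ord (j t)].

Lemma sum_mnm_le_midx (F : 'X_{1..e} -> R) :
  \sum_(h : 'X_{1..e < k} | (h <= mnm_of_midx i)%MM) F h =
  \sum_(j : {ffun 'I_e -> 'I_M.+1} | [forall t, (j t <= i t)%N]) F (lowered j).
Proof.
pose raise (h : 'X_{1..e < k}) : {ffun 'I_e -> 'I_M.+1} := [ffun t => inord (h t)].
pose lower j : 'X_{1..e < k} := insubd (@bm0 e (k.-1)) (lowered j).
have lowerE (j : {ffun 'I_e -> 'I_M.+1}) :
    [forall t, (j t <= i t)%N] -> lower j = lowered j :> 'X_{1..e}.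
  move=> /forallP le_ji; rewrite val_insubd ltnS !mdegE leq_sum // => t _.
  by rewrite !mnm_of_midxE ffunE le_ji.
have le_lowered (j : {ffun 'I_e -> 'I_M.+1}) :
   (lowered j <= mnm_of_midx i)%MM = [forall t, (j t <= i t)%N].
  by apply/mnm_lepP/forallP => le_ji t; move: (le_ji t); rewrite !mnm_of_midxE ffunE.
have raiseK (h : 'X_{1..e < k}) : (h <= mnm_of_midx i)%MM -> lowered (raise h) = h.
  move=> /mnm_lepP le_hi; apply/mnmP => t; rewrite mnm_of_midxE !ffunE inordK //.
  by rewrite ltnS (leq_trans _ (le_iM t)) // -mnm_of_midxE le_hi.
rewrite (reindex_onto lower raise) => [|h le_hi]; last first.
  by apply: val_inj => /=; rewrite lowerE ?raiseK // -le_lowered raiseK.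
have cond j : ((lower j <= mnm_of_midx i)%MM && (raise (lower j) == j)) =
               [forall t, (j t <= i t)%N].
  apply/idP/idP => [/andP[/mnm_lepP le_ji /eqP <-]|le_ji].
    apply/forallP => t; have := le_ji t; rewrite ffunE mnm_of_midxE => le_jit.
    by rewrite inordK // ltnS (leq_trans le_jit).
  rewrite lowerE // le_lowered le_ji; apply/eqP/ffunP => t; apply: val_inj.
  by rewrite /= ffunE lowerE // mnm_of_midxE ffunE inordK.
by apply: eq_big => [j|j]; [exact: cond | rewrite cond => /lowerE ->].
Qed.

End ConvolutionCoefficients.

Lemma mcoeffM_midx_conv (R : nzRingType) e (P Q : {mpoly R[e]}) (i : midx e) :
  (P * Q)@_(mnm_of_midx i) =
  midx_conv (fun j => P@_(mnm_of_midx j)) (fun j => Q@_(mnm_of_midx j)) i.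
Proof.
rewrite [LHS](mcoeff_poly_mul_lin P Q (leqnn _)).
rewrite (sum_mnm_le_midx i (fun h => P@_h * Q@_(mnm_of_midx i - h))).
apply: eq_bigr => j _; congr (_ * Q@_ _); apply/mnmP => t.
by rewrite mnmBE !mnm_of_midxE !ffunE.
Qed.

Section GeneratingPolynomial.
Variables (K : fieldType) (e N : nat) (D : midx e -> K -> K).

Definition hs_poly (a : K) : {mpoly K[e]} :=
  \sum_(j : {ffun 'I_e -> 'I_N})
     D [ffun t => nat_of_ord (j t)] a *: 'X_[mnm_of_midx [ffun t => nat_of_ord (j t)]].

Lemma mcoeff_hs_poly a m :
  (hs_poly a)@_m = if mnm_in_box N m then D (midx_of_mnm m) a else 0.
Proof.
rewrite /hs_poly raddf_sum /=; case: ifPn => [/forallP m_lt|m_out].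
  pose j0 : {ffun 'I_e -> 'I_N} := [ffun t => Ordinal (m_lt t)].
  have j0E : [ffun t => nat_of_ord (j0 t)] = midx_of_mnm m.
    by apply/ffunP => t; rewrite !ffunE.
  rewrite (bigD1 j0) //= big1 ?addr0 => [|j j_neq0].
    by rewrite mcoeffZ mcoeffX j0E midx_of_mnmK eqxx mulr1.
  rewrite mcoeffZ mcoeffX; case: eqP => [jm|]; last by rewrite mulr0.
  case/eqP: j_neq0; apply/ffunP => t; apply: val_inj.
  by rewrite ffunE /= -jm mnm_of_midxE ffunE.
rewrite big1 // => j _; rewrite mcoeffZ mcoeffX; case: eqP => [jm|]; last by rewrite mulr0.
by case/negP: m_out; apply/forallP => t; rewrite -jm mnm_of_midxE ffunE.
Qed.

Lemma mcoeff_hs_poly_midx a i :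
  (hs_poly a)@_(mnm_of_midx i) = if in_box N i then D i a else 0.
Proof. by rewrite mcoeff_hs_poly mnm_in_box_midx mnm_of_midxK. Qed.

Lemma trunc_hom_hs_poly : (0 < N)%N -> is_HS_on (in_box N) D -> trunc_hom N hs_poly.
Proof.
move=> N_gt0 [D0 DD D1 DM].
have box0 : in_box N (midx0 e) by apply/forallP => t; rewrite ffunE.
split.
- move=> a b; apply/mpolyP => m; rewrite -(midx_of_mnmK m) mcoeffD !mcoeff_hs_poly_midx.
  by case: ifP => box_m; rewrite ?DD ?addr0.
- apply/mpolyP => m; rewrite -(midx_of_mnmK m) mcoeff_hs_poly_midx mcoeff1.
  rewrite -mnm_of_midx0 (inj_eq (@mnm_of_midx_inj _)).
  have [->|i_neq0] := eqVneq (midx_of_mnm m) (midx0 e); first by rewrite box0 D1 ?eqxx.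
  by case: ifP => [box_m|_]; rewrite ?D1 // (negbTE i_neq0).
- move=> a b m; rewrite -(midx_of_mnmK m); set i := midx_of_mnm m.
  rewrite mnm_in_box_midx => box_i.
  have box_le (j : midx e) : (forall t, (j t <= i t)%N) -> in_box N j.
    by move=> le_ji; apply/forallP => t; exact: leq_ltn_trans (le_ji t) (forallP box_i t).
  rewrite mcoeffB mcoeff_hs_poly_midx box_i mcoeffM_midx_conv DM //; apply/eqP.
  rewrite subr_eq0; apply/eqP.
  by apply: eq_midx_conv => j /box_le box_j; rewrite mcoeff_hs_poly_midx box_j.
- by move=> a; rewrite -mnm_of_midx0 mcoeff_hs_poly_midx box0 D0.
Qed.

End GeneratingPolynomial.

Section Tower.
Variables (K : fieldType) (e : nat).
Local Notation A := {mpoly K[e]}.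

Lemma trunc_hom_tower p N (psi : K -> A) : p \in [pchar K] -> (0 < N)%N ->
  trunc_hom N psi -> exists psis : nat -> K -> A,
    [/\ psis 0 = psi, forall k, trunc_hom (N + k) (psis k)
      & forall k a, box_ideal (N + k) (psis k.+1 a - psis k a)].
Proof.
move=> pK N_gt0 psiN.
pose lifts n (phi phi' : K -> A) :=
  trunc_hom n.+1 phi' /\ forall a, box_ideal n (phi' a - phi a).
pose next n phi := epsilon (inhabits phi) (lifts n phi).
have nextP n phi : (0 < n)%N -> trunc_hom n phi -> lifts n phi (next n phi).
  move=> n_gt0 phin; apply: epsilon_spec; exact: trunc_hom_lift pK n_gt0 phin.
pose fix psis k := if k is k'.+1 then next (N + k') (psis k') else psi.
have N_k_gt0 k : (0 < N + k)%N by rewrite ltn_addr.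
have psis_hom k : trunc_hom (N + k) (psis k).
  by elim: k => [|k IHk]; rewrite ?addn0 // addnS; exact: (nextP _ _ (N_k_gt0 k) IHk).1.
by exists psis; split=> // k; exact: (nextP _ _ (N_k_gt0 k) (psis_hom k)).2.
Qed.

Section Limit.
Variables (N : nat) (psis : nat -> K -> A).
Hypothesis N_gt0 : (0 < N)%N.
Hypothesis psis_hom : forall k, trunc_hom (N + k) (psis k).
Hypothesis psis_step : forall k a, box_ideal (N + k) (psis k.+1 a - psis k a).

Lemma psis_coherent k k' a : (k <= k')%N -> box_ideal (N + k) (psis k' a - psis k a).
Proof.
move=> /subnK <-; elim: (k' - k)%N => [|d IHd].
  by rewrite add0n; exact (ideal_subrr (box_ideal_ideal _) _).
rewrite addSn; apply: (ideal_subr_trans (box_ideal_ideal _) _ IHd).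
have le_kdk : (N + k <= N + (d + k))%N by rewrite leq_add2l leq_addl.
exact (box_idealS le_kdk (@psis_step (d + k) a)).
Qed.

Lemma psis_mcoeff_stable k k' a m : (k <= k')%N -> mnm_in_box (N + k) m ->
  (psis k' a)@_m = (psis k a)@_m.
Proof.
by move=> le_kk' box_m; apply/eqP; rewrite -subr_eq0 -mcoeffB (psis_coherent a le_kk').
Qed.

Definition limit_HS (i : midx e) (a : K) :=
  (psis (mdeg (mnm_of_midx i)) a)@_(mnm_of_midx i).

Lemma limit_HSE k i a : mnm_in_box (N + k) (mnm_of_midx i) ->
  limit_HS i a = (psis k a)@_(mnm_of_midx i).
Proof.
move=> box_i; rewrite /limit_HS.
rewrite -(psis_mcoeff_stable a (leq_maxr k _) (mnm_in_box_mdeg _ N_gt0)).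
by rewrite (psis_mcoeff_stable a (leq_maxl k _) box_i).
Qed.
Lemma is_HS_limit : is_HS limit_HS.
Proof.
split=> [a|i _ a b|i _|i _ a b]; rewrite [LHS]/limit_HS.
- by rewrite mnm_of_midx0 mdeg0; case: (psis_hom 0).
- by case: (psis_hom (mdeg (mnm_of_midx i))) => -> _ _ _; rewrite mcoeffD.
- case: (psis_hom (mdeg (mnm_of_midx i))) => _ -> _ _.
  by rewrite mcoeff1 -mnm_of_midx0 (inj_eq (@mnm_of_midx_inj _)).
set d := mdeg (mnm_of_midx i); have box_i := mnm_in_box_mdeg (mnm_of_midx i) N_gt0.
have [_ _ psisM _] := psis_hom d.
have /eqP := psisM a b _ box_i; rewrite mcoeffB subr_eq0 => /eqP ->.
rewrite mcoeffM_midx_conv; apply: eq_midx_conv => j le_ji; rewrite (@limit_HSE d) //.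
all: apply/forallP => t; rewrite mnm_of_midxE (leq_ltn_trans (le_ji t)) //.
all: by have /forallP/(_ t) := box_i; rewrite mnm_of_midxE.
Qed.

End Limit.
End Tower.

Unset Implicit Arguments.
Set Strict Implicit.

Theorem corollary2p5 (K : fieldType) (p e m : nat)
    (charK : p \in [pchar K]) (he : (0 < e)%N) (hm : (0 < m)%N)
    (D : midx e -> K -> K) :
  is_trunc_HS p m D ->
  exists D' : midx e -> K -> K,
    is_HS D' /\ (forall i, in_box (p ^ m) i -> D' i = D i).
Proof.
move=> HS_D; have N_gt0 : (0 < p ^ m)%N.
  by rewrite expn_gt0 prime_gt0 // (pcharf_prime charK).
have [psis [psis0 psis_hom psis_step]] :=
  trunc_hom_tower charK N_gt0 (trunc_hom_hs_poly N_gt0 HS_D).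
exists (limit_HS psis); split; first exact: is_HS_limit N_gt0 psis_hom psis_step.
move=> i box_i; apply: boolp.funext => a.
rewrite (limit_HSE N_gt0 psis_step (k := 0)) ?psis0 ?mcoeff_hs_poly_midx ?box_i //.
by rewrite addn0 mnm_in_box_midx.
Qed.
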